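(* Let $m\ge2$ be even and let $\mathcal{A},\mathcal{B}$ be sub-symmetric real $m$-th order $n$-dimensional tensors ($n=n_1+\cdots+n_r$). Consider the problem $$\begin{array}{cl}\min & f(x,y,w,\lambda):=\|y-\lambda^{\frac1{m-1}}x\|^2+(x^\top w)^2\\ \text{s.t.} & w-\mathcal{A}y^{m-1}+\mathcal{B}x^{m-1}=0,\\ & (x^i_\circ)^2-\|x^i_\bullet\|^2\ge0,\ x^i_\circ\ge0,\ i=1,\ldots,r,\\ & (w^i_\circ)^2-\|w^i_\bullet\|^2\ge0,\ w^i_\circ\ge0,\ i=1,\ldots,r,\\ & e^\top x=1,\quad e^\top y=\lambda^{\frac1{m-1}}.\end{array}$$ Let $(\bar x,\bar y,\bar w,\bar\lambda)$ be a stationary point of this problem with $\bar\lambda\neq0$, with associated multipliers as below, and let $\bar\delta,\bar\eta$ be the multipliers of the constraints $e^\top x=1$ and $e^\top y=\lambda^{1/(m-1)}$, respectively. Then $f(\bar x,\bar y,\bar w,\bar\lambda)=0$ if and only if $\bar\delta=\bar\eta=0$.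
   Context: A real $m$-th order $n$-dimensional tensor $\mathcal{A}=(a_{i_1\ldots i_m})$ is sub-symmetric if for each $i$ the tensor $(a_{ii_2\ldots i_m})_{i_2,\ldots,i_m}$ is invariant under permutations of $i_2,\ldots,i_m$. $\mathcal{A}x^{m-1}\in\mathbb{R}^n$ has $i$-th component $\sum_{i_2,\ldots,i_m}a_{ii_2\ldots i_m}x_{i_2}\cdots x_{i_m}$. Vectors are written $x=(x^1,\ldots,x^r)\in\mathbb{R}^{n_1}\times\cdots\times\mathbb{R}^{n_r}$, $x^i=(x^i_\circ,x^i_\bullet)\in\mathbb{R}\times\mathbb{R}^{n_i-1}$ (similarly $y,w$). $e=(e^1,\ldots,e^r)$, $e^i=(1,0,\ldots,0)^\top\in\mathbb{R}^{n_i}$. Since $m-1$ is odd, $\lambda^{1/(m-1)}$ is the real $(m-1)$-th root (differentiable at $\lambda\ne0$). A stationary point is a feasible point $(\bar x,\bar y,\bar w,\bar\lambda)$ for which there exist multipliers $\bar\alpha\in\mathbb{R}^n$, $\bar\beta,\bar\gamma,\bar\mu,\bar\theta\in\mathbb{R}^r_+$, $\bar\delta,\bar\eta\in\mathbb{R}$ such that the gradient with respect to $(x,y,w,\lambda)$ of the Lagrangian $$f-\bar\alpha^\top(w-\mathcal{A}y^{m-1}+\mathcal{B}x^{m-1})-\sum_i\bar\beta_i\big((x^i_\circ)^2-\|x^i_\bullet\|^2\big)-\sum_i\bar\gamma_ix^i_\circ-\sum_i\bar\mu_i\big((w^i_\circ)^2-\|w^i_\bullet\|^2\big)-\sum_i\bar\theta_iw^i_\circ-\bar\delta(e^\top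 x-1)-\bar\eta(e^\top y-\lambda^{\frac1{m-1}})$$ vanishes at $(\bar x,\bar y,\bar w,\bar\lambda)$, and each inequality multiplier times its constraint value is zero. *)

From HB Require Import structures.
From mathcomp Require Import all_boot all_order all_algebra all_fingroup.
From mathcomp Require Import all_classical all_reals all_analysis.
Set Implicit Arguments. Unset Strict Implicit. Unset Printing Implicit Defensive.
Import Order.TTheory GRing.Theory Num.Theory.
Import numFieldNormedType.Exports.
Local Open Scope ring_scope.

Section Defs.
Variable R : realType.
Variable r : nat.
(* block i has size n_i = (d i).+1; coordinate 0 of each block is x^i_circ *)
Variable d : 'I_r -> nat.

(* global index set of R^n, n = n_1 + ... + n_r, organized by blocks *)
Definition idx := {i : 'I_r & 'I_(d i).+1}.
Definition vec := idx -> R.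

Definition blk (i : 'I_r) (j : 'I_(d i).+1) : idx := existT _ i j.

Definition hd (x : vec) (i : 'I_r) : R := x (blk (ord0 : 'I_(d i).+1)).
Definition tlsq (x : vec) (i : 'I_r) : R :=
  \sum_(j : 'I_(d i).+1 | j != ord0) x (blk j) ^+ 2.
Definition eT (x : vec) : R := \sum_(i < r) hd x i.
Definition dotv (x y : vec) : R := \sum_(k : idx) x k * y k.

(* an m-th order n-dimensional tensor: a_{k i_2 ... i_m} = A k s,
   where s : 'I_(m-1) -> idx lists (i_2, ..., i_m) *)
Definition tensor (m : nat) := idx -> {ffun 'I_m.-1 -> idx} -> R.

Definition tapp (m : nat) (A : tensor m) (x : vec) : vec :=
  fun k => \sum_(s : {ffun 'I_m.-1 -> idx}) A k s * \prod_(l < m.-1) x (s l).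

Definition subsym (m : nat) (A : tensor m) : Prop :=
  forall k (s : {ffun 'I_m.-1 -> idx}) (p : 'S_m.-1),
    A k [ffun l => s (p l)] = A k s.

Definition oddroot (k : nat) (lam : R) : R :=
  if 0 <= lam then lam `^ (k%:R^-1) else - ((- lam) `^ (k%:R^-1)).

Definition fobj (m : nat) (x y w : vec) (lam : R) : R :=
  \sum_(k : idx) (y k - oddroot m.-1 lam * x k) ^+ 2 + (dotv x w) ^+ 2.

Definition feasible (m : nat) (A B : tensor m) (x y w : vec) (lam : R) : Prop :=
  [/\ forall k, w k - tapp A y k + tapp B x k = 0,
      forall i, 0 <= hd x i ^+ 2 - tlsq x i /\ 0 <= hd x i,
      forall i, 0 <= hd w i ^+ 2 - tlsq w i /\ 0 <= hd w i,
      eT x = 1 & eT y = oddroot m.-1 lam].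

Definition lagr (m : nat) (A B : tensor m) (al : vec)
  (be ga mu th : 'I_r -> R) (de et : R) (x y w : vec) (lam : R) : R :=
  fobj m x y w lam
  - dotv al (fun k => w k - tapp A y k + tapp B x k)
  - \sum_(i < r) be i * (hd x i ^+ 2 - tlsq x i)
  - \sum_(i < r) ga i * hd x i
  - \sum_(i < r) mu i * (hd w i ^+ 2 - tlsq w i)
  - \sum_(i < r) th i * hd w i
  - de * (eT x - 1)
  - et * (eT y - oddroot m.-1 lam).

Definition upd (x : vec) (j : idx) (t : R) : vec :=
  fun k => x k + t * (k == j)%:R.

Definition stationary (m : nat) (A B : tensor m) (x y w : vec) (lam : R)
  (al : vec) (be ga mu th : 'I_r -> R) (de et : R) : Prop :=
  [/\ feasible A B x y w lam,
      (forall j, is_derive (0:R) (1:R)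
         (fun t => lagr A B al be ga mu th de et (upd x j t) y w lam) 0)
      /\ (forall j, is_derive (0:R) (1:R)
         (fun t => lagr A B al be ga mu th de et x (upd y j t) w lam) 0)
      /\ (forall j, is_derive (0:R) (1:R)
         (fun t => lagr A B al be ga mu th de et x y (upd w j t) lam) 0)
      /\ is_derive lam (1:R)
         (fun l => lagr A B al be ga mu th de et x y w l) 0,
      forall i, [/\ 0 <= be i, 0 <= ga i, 0 <= mu i & 0 <= th i],
      forall i, be i * (hd x i ^+ 2 - tlsq x i) = 0 /\ ga i * hd x i = 0
      & forall i, mu i * (hd w i ^+ 2 - tlsq w i) = 0 /\ th i * hd w i = 0].

End Defs.

From HB Require Import structures.
From mathcomp Require Import all_boot all_order all_algebra all_fingroup.
From mathcomp Require Import all_classical all_reals all_analysis.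
From mathcomp Require Import ring lra.
Import Order.TTheory GRing.Theory Num.Theory.
Local Open Scope ring_scope.

(* Differentiating the Lagrangian along the rays through x, y and w, the
   homogeneous constraint terms contribute multiples of themselves (Euler's
   identity), the cone terms vanish by complementarity, and e^T x = 1,
   e^T y = lambda^(1/(m-1)) fix the remaining multiplier terms.  Combined with
   w = A y^(m-1) - B x^(m-1), the three identities give
     2 f + 2 (m-1) (x^T w)^2 = delta + eta lambda^(1/(m-1)).
   Differentiating in lambda through lambda = c^(m-1) gives
   eta = 2 sum_k (y_k - c x_k) x_k.  If f = 0 then y = c x and x^T w = 0, so
   eta = 0 and then delta = 0; conversely delta = eta = 0 forces f = 0, both
   terms on the left being nonnegative. *)

Set Implicit Arguments. Unset Strict Implicit.

Section LineDerivatives.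
Variable R : realType.

Lemma is_derive_unique (a : R) (f : R -> R) (df df' : R) :
  is_derive a 1 f df -> is_derive a 1 f df' -> df = df'.
Proof. by move=> [_ <-] [_ <-]. Qed.

Global Instance is_derive_exp (a : R) (f : R -> R) (df : R) n :
  is_derive a 1 f df -> is_derive a 1 (fun t => f t ^+ n) (n%:R * f a ^+ n.-1 * df).
Proof.
move=> hf; have := is_deriveX n hf; rewrite exprfctE.
by rewrite /GRing.scale /= mulrC.
Qed.

End LineDerivatives.

Section Gradient.
Variables (R : realType) (r : nat) (d : 'I_r -> nat).
Local Notation vec := (vec R d).
Local Notation idx := (idx d).

(* Vanishing partial derivatives only give a vanishing derivative along a ray
   once directional derivatives are known to be linear in the direction. *)
Definition has_gradient (x0 : vec) (F : vec -> R) := exists dF : vec,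
  forall v : vec, is_derive (0 : R) 1 (fun t => F (fun k => x0 k + t * v k))
                            (\sum_k v k * dF k).

Variable x0 : vec.

Lemma line_at0 (v : vec) : (fun k => x0 k + 0 * v k) = x0.
Proof. by apply: funext => k; rewrite mul0r addr0. Qed.

Lemma has_gradient_cst (a : R) : has_gradient x0 (fun=> a).
Proof.
exists (fun=> 0) => v; apply: is_derive_eq.
by rewrite big1 // => k _; rewrite mulr0.
Qed.

Lemma has_gradient_coord j : has_gradient x0 (fun z => z j).
Proof.
exists (fun k => (k == j)%:R) => v; apply: is_derive_eq.
rewrite (bigD1 j) //= eqxx big1 => [|k /negbTE ->]; last by rewrite mulr0.
by rewrite /GRing.scale /=; ring.
Qed.

Lemma has_gradient_add F G :
  has_gradient x0 F -> has_gradient x0 G -> has_gradient x0 (fun z => F z + G z).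
Proof.
move=> [dF hF] [dG hG]; exists (fun k => dF k + dG k) => v; apply: is_derive_eq.
by rewrite -big_split; apply: eq_bigr => k _; rewrite mulrDr.
Qed.

Lemma has_gradient_sub F G :
  has_gradient x0 F -> has_gradient x0 G -> has_gradient x0 (fun z => F z - G z).
Proof.
move=> [dF hF] [dG hG]; exists (fun k => dF k - dG k) => v; apply: is_derive_eq.
by rewrite -sumrB; apply: eq_bigr => k _; rewrite mulrBr.
Qed.

Lemma has_gradient_mul F G :
  has_gradient x0 F -> has_gradient x0 G -> has_gradient x0 (fun z => F z * G z).
Proof.
move=> [dF hF] [dG hG]; exists (fun k => F x0 * dG k + G x0 * dF k) => v.
apply: is_derive_eq; rewrite /GRing.scale /= line_at0 !mulr_sumr -big_split.
by apply: eq_bigr => k _; rewrite mulrDr !(mulrCA (v k)).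
Qed.

Lemma has_gradient_exp F n : has_gradient x0 F -> has_gradient x0 (fun z => F z ^+ n).
Proof.
move=> [dF hF]; exists (fun k => n%:R * F x0 ^+ n.-1 * dF k) => v.
apply: is_derive_eq; rewrite line_at0 mulr_sumr.
by apply: eq_bigr => k _; rewrite mulrCA.
Qed.

Lemma has_gradient_sum (I : Type) (s : seq I) (P : pred I) (F : I -> vec -> R) :
  (forall i, has_gradient x0 (F i)) ->
  has_gradient x0 (fun z => \sum_(i <- s | P i) F i z).
Proof.
move=> hF; elim: s => [|i s IH].
  by under eq_fun do rewrite big_nil; exact: has_gradient_cst.
under eq_fun do rewrite big_cons.
by case: (P i) => //; exact: has_gradient_add.
Qed.

Lemma has_gradient_prod (I : Type) (s : seq I) (P : pred I) (F : I -> vec -> R) :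
  (forall i, has_gradient x0 (F i)) ->
  has_gradient x0 (fun z => \prod_(i <- s | P i) F i z).
Proof.
move=> hF; elim: s => [|i s IH].
  by under eq_fun do rewrite big_nil; exact: has_gradient_cst.
under eq_fun do rewrite big_cons.
by case: (P i) => //; exact: has_gradient_mul.
Qed.

Lemma has_gradient_line_derive0 F : has_gradient x0 F ->
  (forall j, is_derive (0 : R) 1 (fun t => F (upd x0 j t)) 0) ->
  forall v, is_derive (0 : R) 1 (fun t => F (fun k => x0 k + t * v k)) 0.
Proof.
move=> [dF hF] hpart v.
have dF0 j : dF j = 0.
  have := is_derive_unique (hF (fun k => (k == j)%:R)) (hpart j).
  rewrite (bigD1 j) //= eqxx mul1r big1 ?addr0 // => k /negbTE ->.
  by rewrite mul0r.
by apply: is_derive_eq; rewrite big1 // => k _; rewrite dF0 mulr0.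
Qed.

End Gradient.

Section Homogeneity.
Variables (R : realType) (r : nat) (d : 'I_r -> nat).
Local Notation vec := (vec R d).

Definition scalev (s : R) (z : vec) : vec := fun k => s * z k.

Lemma line_scalev (z : vec) t : (fun k => z k + t * z k) = scalev (1 + t) z.
Proof. by apply: funext => k; rewrite /scalev mulrDl mul1r. Qed.

Lemma eT_scalev s z : eT (scalev s z) = s * eT z.
Proof. by rewrite /eT mulr_sumr. Qed.

Lemma dotv_scalevl s (u v : vec) : dotv (scalev s u) v = s * dotv u v.
Proof. by rewrite /dotv mulr_sumr; apply: eq_bigr => k _; rewrite mulrA. Qed.

Lemma dotv_scalevr s (u v : vec) : dotv u (scalev s v) = s * dotv u v.
Proof. by rewrite /dotv mulr_sumr; apply: eq_bigr => k _; rewrite mulrCA. Qed.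

Lemma tapp_scalev m (A : tensor R d m) s z k :
  tapp A (scalev s z) k = s ^+ m.-1 * tapp A z k.
Proof.
rewrite /tapp mulr_sumr; apply: eq_bigr => t _.
by rewrite big_split /= prodr_const card_ord mulrCA.
Qed.

Lemma sum_cone_scalev (a : 'I_r -> R) s z :
  \sum_(i < r) a i * (hd (scalev s z) i ^+ 2 - tlsq (scalev s z) i) =
  s ^+ 2 * \sum_(i < r) a i * (hd z i ^+ 2 - tlsq z i).
Proof.
rewrite mulr_sumr; apply: eq_bigr => i _.
have -> : tlsq (scalev s z) i = s ^+ 2 * tlsq z i.
  by rewrite /tlsq mulr_sumr; apply: eq_bigr => j _; rewrite exprMn.
by rewrite /hd /scalev; ring.
Qed.

Lemma sum_hd_scalev (a : 'I_r -> R) s z :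
  \sum_(i < r) a i * hd (scalev s z) i = s * \sum_(i < r) a i * hd z i.
Proof. by rewrite mulr_sumr; apply: eq_bigr => i _; rewrite mulrCA. Qed.

Lemma sum_sqr_sub (u v : vec) (a : R) :
  \sum_k (u k - a * v k) ^+ 2 = a ^+ 2 * dotv v v - 2 * a * dotv v u + dotv u u.
Proof.
rewrite /dotv !mulr_sumr -sumrB -big_split; apply: eq_bigr => k _ /=; ring.
Qed.

Lemma fobj_expand m (x y w : vec) lam : fobj m x y w lam =
  oddroot m.-1 lam ^+ 2 * dotv x x - 2 * oddroot m.-1 lam * dotv x y
  + dotv y y + dotv x w ^+ 2.
Proof. by rewrite /fobj sum_sqr_sub. Qed.

End Homogeneity.

Section OddRoot.
Variable R : realType.

Lemma powR_oddK k (a : R) : odd k -> 0 <= a -> (a ^+ k) `^ (k%:R^-1) = a.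
Proof.
move=> hk ha; have k0 : (k%:R : R) != 0 by rewrite pnatr_eq0; case: k hk.
by rewrite -powR_mulrn // -powRrM mulfV // powRr1.
Qed.

Lemma oddroot_exp k (a : R) : odd k -> oddroot k (a ^+ k) = a.
Proof.
move=> hk; rewrite /oddroot; case: (leP 0 a) => ha.
  by rewrite exprn_ge0 // powR_oddK.
have hneg : a ^+ k = - (- a) ^+ k.
  by rewrite exprNn -signr_odd hk expr1 mulN1r opprK.
have hpos : 0 < (- a) ^+ k by rewrite exprn_gt0 // oppr_gt0.
rewrite hneg oppr_ge0 leNgt hpos /= opprK powR_oddK ?opprK //.
by rewrite oppr_ge0 ltW.
Qed.

Lemma exp_oddroot k (l : R) : odd k -> oddroot k l ^+ k = l.
Proof.
move=> hk; have k0 : (k%:R : R) != 0 by rewrite pnatr_eq0; case: k hk.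
rewrite /oddroot; case: (leP 0 l) => hl.
  by rewrite -powR_mulrn ?powR_ge0 // -powRrM mulVf // powRr1.
rewrite exprNn -signr_odd hk expr1 mulN1r.
rewrite -powR_mulrn ?powR_ge0 // -powRrM mulVf // powRr1 ?opprK //.
by rewrite oppr_ge0 ltW.
Qed.

End OddRoot.

Section Lagrangian.
Variables (R : realType) (r : nat) (d : 'I_r -> nat).
Local Notation vec := (vec R d).
Variables (m : nat) (A B : tensor R d m) (al : vec) (be ga mu th : 'I_r -> R).
Variables (de et : R) (x y w : vec) (lam : R).
Local Notation L := (lagr A B al be ga mu th de et).
Local Notation c := (oddroot m.-1 lam).

Ltac solve_gradient :=
  rewrite /lagr /fobj /dotv /tapp /eT /hd /tlsq;
  repeat first [ apply: has_gradient_sub | apply: has_gradient_add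
               | apply: has_gradient_mul | apply: has_gradient_exp
               | apply: has_gradient_sum => ? | apply: has_gradient_prod => ?
               | apply: has_gradient_coord | apply: has_gradient_cst ].

Lemma lagr_gradient_x : has_gradient x (fun z => L z y w lam).
Proof. solve_gradient. Qed.

Lemma lagr_gradient_y : has_gradient y (fun z => L x z w lam).
Proof. solve_gradient. Qed.

Lemma lagr_gradient_w : has_gradient w (fun z => L x y z lam).
Proof. solve_gradient. Qed.

Lemma lagr_ray_x : exists K, forall s, L (scalev s x) y w lam =
  s ^+ 2 * (c ^+ 2 * dotv x x + dotv x w ^+ 2) - 2 * c * s * dotv x y
  - s ^+ m.-1 * dotv al (tapp B x)
  - s ^+ 2 * \sum_(i < r) be i * (hd x i ^+ 2 - tlsq x i)
  - s * \sum_(i < r) ga i * hd x i - de * s * eT x + K.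
Proof.
exists (dotv y y - dotv al (fun k => w k - tapp A y k)
  - \sum_(i < r) mu i * (hd w i ^+ 2 - tlsq w i) - \sum_(i < r) th i * hd w i
  + de - et * (eT y - c)) => s.
rewrite /lagr fobj_expand sum_cone_scalev sum_hd_scalev eT_scalev.
rewrite !dotv_scalevl !dotv_scalevr.
have -> : dotv al (fun k => w k - tapp A y k + tapp B (scalev s x) k) =
    dotv al (fun k => w k - tapp A y k) + s ^+ m.-1 * dotv al (tapp B x).
  rewrite /dotv mulr_sumr -big_split; apply: eq_bigr => k _ /=.
  by rewrite tapp_scalev; ring.
ring.
Qed.

Lemma stationary_x :
  (forall j, is_derive (0 : R) 1 (fun t => L (upd x j t) y w lam) 0) ->
  (forall i, be i * (hd x i ^+ 2 - tlsq x i) = 0 /\ ga i * hd x i = 0) ->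
  eT x = 1 ->
  2 * (c ^+ 2 * dotv x x + dotv x w ^+ 2 - c * dotv x y)
  - m.-1%:R * dotv al (tapp B x) - de = 0.
Proof.
move=> hpart hcomp heT.
have cone0 : \sum_(i < r) be i * (hd x i ^+ 2 - tlsq x i) = 0.
  by apply: big1 => i _; case: (hcomp i).
have hd0 : \sum_(i < r) ga i * hd x i = 0.
  by apply: big1 => i _; case: (hcomp i).
have [K hK] := lagr_ray_x.
have := has_gradient_line_derive0 lagr_gradient_x hpart x.
under eq_fun do rewrite line_scalev hK cone0 hd0 heT.
(* The hypothesis stays in the goal: in the context, typeclass resolution would
   return it as the derivative computed by is_derive_eq. *)
apply: is_derive_unique; apply: is_derive_eq.
by rewrite /GRing.scale /= !addr0 !expr1n; ring.
Qed.

Lemma lagr_ray_y : exists K, forall s, L x (scalev s y) w lam =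
  s ^+ 2 * dotv y y - 2 * c * s * dotv x y
  + s ^+ m.-1 * dotv al (tapp A y) - et * s * eT y + K.
Proof.
exists (c ^+ 2 * dotv x x + dotv x w ^+ 2 - dotv al (fun k => w k + tapp B x k)
  - \sum_(i < r) be i * (hd x i ^+ 2 - tlsq x i) - \sum_(i < r) ga i * hd x i
  - \sum_(i < r) mu i * (hd w i ^+ 2 - tlsq w i) - \sum_(i < r) th i * hd w i
  - de * (eT x - 1) + et * c) => s.
rewrite /lagr fobj_expand eT_scalev !dotv_scalevl !dotv_scalevr.
have -> : dotv al (fun k => w k - tapp A (scalev s y) k + tapp B x k) =
    dotv al (fun k => w k + tapp B x k) - s ^+ m.-1 * dotv al (tapp A y).
  rewrite /dotv mulr_sumr -sumrB; apply: eq_bigr => k _ /=.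
  by rewrite tapp_scalev; ring.
ring.
Qed.

Lemma lagr_ray_w : exists K, forall s, L x y (scalev s w) lam =
  s ^+ 2 * dotv x w ^+ 2 - s * dotv al w
  - s ^+ 2 * \sum_(i < r) mu i * (hd w i ^+ 2 - tlsq w i)
  - s * \sum_(i < r) th i * hd w i + K.
Proof.
exists (c ^+ 2 * dotv x x - 2 * c * dotv x y + dotv y y
  - dotv al (fun k => tapp B x k - tapp A y k)
  - \sum_(i < r) be i * (hd x i ^+ 2 - tlsq x i) - \sum_(i < r) ga i * hd x i
  - de * (eT x - 1) - et * (eT y - c)) => s.
rewrite /lagr fobj_expand sum_cone_scalev sum_hd_scalev dotv_scalevr.
have -> : dotv al (fun k => scalev s w k - tapp A y k + tapp B x k) =
    s * dotv al w + dotv al (fun k => tapp B x k - tapp A y k).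
  rewrite /dotv mulr_sumr -big_split; apply: eq_bigr => k _ /=.
  by rewrite /scalev; ring.
ring.
Qed.

Lemma lagr_exp_lam : odd m.-1 -> exists K, forall a, L x y w (a ^+ m.-1) =
  a ^+ 2 * dotv x x - 2 * a * dotv x y + et * a + K.
Proof.
move=> hodd.
exists (dotv y y + dotv x w ^+ 2 - dotv al (fun k => w k - tapp A y k + tapp B x k)
  - \sum_(i < r) be i * (hd x i ^+ 2 - tlsq x i) - \sum_(i < r) ga i * hd x i
  - \sum_(i < r) mu i * (hd w i ^+ 2 - tlsq w i) - \sum_(i < r) th i * hd w i
  - de * (eT x - 1) - et * eT y) => a.
by rewrite /lagr fobj_expand oddroot_exp //; ring.
Qed.

Lemma stationary_y :
  (forall j, is_derive (0 : R) 1 (fun t => L x (upd y j t) w lam) 0) ->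
  eT y = c ->
  2 * (dotv y y - c * dotv x y) + m.-1%:R * dotv al (tapp A y) - et * c = 0.
Proof.
move=> hpart heT; have [K hK] := lagr_ray_y.
have := has_gradient_line_derive0 lagr_gradient_y hpart y.
under eq_fun do rewrite line_scalev hK heT.
apply: is_derive_unique; apply: is_derive_eq.
by rewrite /GRing.scale /= !addr0 !expr1n; ring.
Qed.

Lemma stationary_w :
  (forall j, is_derive (0 : R) 1 (fun t => L x y (upd w j t) lam) 0) ->
  (forall i, mu i * (hd w i ^+ 2 - tlsq w i) = 0 /\ th i * hd w i = 0) ->
  2 * dotv x w ^+ 2 - dotv al w = 0.
Proof.
move=> hpart hcomp.
have cone0 : \sum_(i < r) mu i * (hd w i ^+ 2 - tlsq w i) = 0.
  by apply: big1 => i _; case: (hcomp i).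
have hd0 : \sum_(i < r) th i * hd w i = 0.
  by apply: big1 => i _; case: (hcomp i).
have [K hK] := lagr_ray_w.
have := has_gradient_line_derive0 lagr_gradient_w hpart w.
under eq_fun do rewrite line_scalev hK cone0 hd0.
apply: is_derive_unique; apply: is_derive_eq.
by rewrite /GRing.scale /= !addr0 !expr1n; ring.
Qed.

Lemma stationary_lam : odd m.-1 ->
  is_derive lam 1 (fun l => L x y w l) 0 ->
  2 * (c * dotv x x - dotv x y) + et = 0.
Proof.
move=> hodd hlam; have [K hK] := lagr_exp_lam hodd.
have hlam' : is_derive (c ^+ m.-1) 1 (fun l => L x y w l) 0 by rewrite exp_oddroot.
have hexp : is_derive c 1 (fun a : R => a ^+ m.-1) (m.-1%:R * c ^+ m.-2 * 1).
  exact: is_derive_exp.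
have : is_derive c 1 (fun a => L x y w (a ^+ m.-1)) 0.
  have := @is_derive1_comp R (fun l => L x y w l) _ c _ _ hlam' hexp.
  by rewrite mul0r.
under eq_fun do rewrite hK.
apply: is_derive_unique; apply: is_derive_eq.
by rewrite /GRing.scale /=; ring.
Qed.

End Lagrangian.

Section Objective.
Variables (R : realType) (r : nat) (d : 'I_r -> nat).
Variables (m : nat) (x y w : vec R d) (lam : R).
Local Notation c := (oddroot m.-1 lam).

Lemma fobj_ge0 : 0 <= fobj m x y w lam.
Proof. by rewrite /fobj addr_ge0 ?sqr_ge0 // sumr_ge0 // => k _; exact: sqr_ge0. Qed.

Lemma fobj_eq0 : fobj m x y w lam = 0 ->
  dotv x y = c * dotv x x /\ dotv x w = 0.
Proof.
rewrite /fobj => hf.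
have hres : 0 <= \sum_k (y k - c * x k) ^+ 2.
  by apply: sumr_ge0 => k _; exact: sqr_ge0.
have hP := sqr_ge0 (dotv x w).
have hres0 : \sum_k (y k - c * x k) ^+ 2 = 0 by lra.
have hyx k : y k = c * x k.
  apply/eqP; rewrite -subr_eq0 -sqrf_eq0; apply/eqP.
  by apply: (psumr_eq0P _ hres0) => // j _; exact: sqr_ge0.
split; last by apply/eqP; rewrite -sqrf_eq0; apply/eqP; lra.
by rewrite /dotv mulr_sumr; apply: eq_bigr => k _; rewrite hyx mulrCA.
Qed.

End Objective.

Lemma stationary_fobj_identity (R : realType) (r : nat) (d : 'I_r -> nat) (m : nat)
    (A B : tensor R d m) (x y w : vec R d) (lam : R) (al : vec R d)
    (be ga mu th : 'I_r -> R) (de et : R) :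
  stationary A B x y w lam al be ga mu th de et ->
  2 * fobj m x y w lam + 2 * m.-1%:R * dotv x w ^+ 2 =
  de + et * oddroot m.-1 lam.
Proof.
case=> [[hfeas _ _ heTx heTy] [hx [hy [hw _]]] _ hcx hcw].
have Ex := stationary_x hx hcx heTx.
have Ey := stationary_y hy heTy.
have Ew := stationary_w hw hcw.
have hal : dotv al w = dotv al (tapp A y) - dotv al (tapp B x).
  rewrite /dotv -sumrB; apply: eq_bigr => k _; rewrite -mulrBr.
  by congr (_ * _); have := hfeas k; lra.
have {Ew} Ew : m.-1%:R * (2 * dotv x w ^+ 2 - dotv al w) = 0 by rewrite Ew mulr0.
rewrite hal in Ew; rewrite fobj_expand; lra.
Qed.

Unset Implicit Arguments. Set Strict Implicit.

Theorem theorem5 (R : realType) (r : nat) (d : 'I_r -> nat) (m : nat)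
  (A B : tensor R d m)
  (x y w : vec R d) (lam : R)
  (al : vec R d) (be ga mu th : 'I_r -> R) (de et : R) :
  (2 <= m)%N -> ~~ odd m ->
  subsym A -> subsym B ->
  stationary A B x y w lam al be ga mu th de et ->
  lam != 0 ->
  (fobj m x y w lam = 0 <-> de = 0 /\ et = 0).
Proof.
move=> hm hev _ _ hst _.
have hodd : odd m.-1 by move: hm hev; case: (m) => [|n] //= _; rewrite negbK.
have key := stationary_fobj_identity hst.
have [_ [_ [_ [_ hlam]]] _ _ _] := hst.
have het := stationary_lam hodd hlam.
split => [hf | [hde het0]].
- have [hxy hxw] := fobj_eq0 hf.
  have et0 : et = 0 by move: het; rewrite hxy subrr mulr0 add0r.
  by move: key; rewrite hf hxw et0; split => //; lra.
- have hf := fobj_ge0 m x y w lam.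
  have hP : 0 <= m.-1%:R * dotv x w ^+ 2 by rewrite mulr_ge0 ?sqr_ge0.
  by move: key; rewrite hde het0; lra.
Qed.
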